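(* Let $x,y,z\in[0,1]$ satisfy $2y=x+z$. Suppose that \[(1-\{x\})^2+(1-\{z\})^2-2(1-\{y\})^2<2\left(\frac{z-x}{2}\right)^2.\] Then $\min(x,z)<1/2\le y$.
   Context: For $x\in[0,1]$, $\{x\}:=x$ if $x<1/2$ and $\{x\}:=x-1/2$ if $x\ge 1/2$ (this is not the usual fractional part). *)

From Stdlib Require Import Reals Lra.
Open Scope R_scope.

Definition frac2 (x : R) : R := if Rlt_dec x (1/2) then x else x - 1/2.

(* Write u(t) = 1 - {t}.  When x, y, z lie on the same side of 1/2, the three
   values of u are shifted by the same constant, and the identity
   a^2 + b^2 - 2((a+b)/2)^2 = 2((a-b)/2)^2 turns the hypothesis into an
   equality, which is impossible.  If y < 1/2 while (say) z >= 1/2, the shift of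
   u(z) adds exactly 5/4 - z >= 1/4 to the left-hand side, again contradicting
   the strict inequality.  Hence y >= 1/2 and min(x, z) < 1/2. *)
From Stdlib Require Import Reals Lra.
Open Scope R_scope.

Lemma frac2_lt (t : R) : t < 1/2 -> frac2 t = t.
Proof. intros Ht; unfold frac2; destruct (Rlt_dec t (1/2)); lra. Qed.

Lemma frac2_ge (t : R) : 1/2 <= t -> frac2 t = t - 1/2.
Proof. intros Ht; unfold frac2; destruct (Rlt_dec t (1/2)); lra. Qed.

Definition midpoint_defect (x y z : R) : R :=
  (1 - frac2 x) ^ 2 + (1 - frac2 z) ^ 2 - 2 * (1 - frac2 y) ^ 2
  - 2 * ((z - x) / 2) ^ 2.

Lemma midpoint_defect_sym (x y z : R) :
  midpoint_defect x y z = midpoint_defect z y x.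
Proof. unfold midpoint_defect; field. Qed.

Lemma midpoint_defect_below (x y z : R) :
  x < 1/2 -> y < 1/2 -> z < 1/2 -> 2 * y = x + z ->
  midpoint_defect x y z = 0.
Proof.
  intros Hx Hy Hz Hxyz; unfold midpoint_defect.
  rewrite (frac2_lt x), (frac2_lt y), (frac2_lt z) by assumption.
  replace y with ((x + z) / 2) by lra; field.
Qed.

Lemma midpoint_defect_above (x y z : R) :
  1/2 <= x -> 1/2 <= y -> 1/2 <= z -> 2 * y = x + z ->
  midpoint_defect x y z = 0.
Proof.
  intros Hx Hy Hz Hxyz; unfold midpoint_defect.
  rewrite (frac2_ge x), (frac2_ge y), (frac2_ge z) by assumption.
  replace y with ((x + z) / 2) by lra; field.
Qed.

Lemma midpoint_defect_straddle (x y z : R) :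
  x < 1/2 -> y < 1/2 -> 1/2 <= z -> 2 * y = x + z ->
  midpoint_defect x y z = 5/4 - z.
Proof.
  intros Hx Hy Hz Hxyz; unfold midpoint_defect.
  rewrite (frac2_lt x), (frac2_lt y), (frac2_ge z) by assumption.
  replace y with ((x + z) / 2) by lra; field.
Qed.

Lemma midpoint_defect_nonneg_of_ordered (x y z : R) :
  x <= z <= 1 -> y < 1/2 -> 2 * y = x + z -> 0 <= midpoint_defect x y z.
Proof.
  intros Hxz Hy Hxyz.
  destruct (Rlt_dec z (1/2)) as [Hz | Hz].
  - rewrite midpoint_defect_below by lra; lra.
  - rewrite midpoint_defect_straddle by lra; lra.
Qed.

Lemma midpoint_defect_nonneg (x y z : R) :
  x <= 1 -> z <= 1 -> y < 1/2 -> 2 * y = x + z -> 0 <= midpoint_defect x y z.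
Proof.
  intros Hx Hz Hy Hxyz.
  destruct (Rle_dec x z).
  - apply midpoint_defect_nonneg_of_ordered; lra.
  - rewrite midpoint_defect_sym; apply midpoint_defect_nonneg_of_ordered; lra.
Qed.

Theorem lemma4p2 (x y z : R)
  (hx : 0 <= x <= 1) (hy : 0 <= y <= 1) (hz : 0 <= z <= 1)
  (hxyz : 2 * y = x + z)
  (h : (1 - frac2 x) ^ 2 + (1 - frac2 z) ^ 2 - 2 * (1 - frac2 y) ^ 2
       < 2 * ((z - x) / 2) ^ 2) :
  Rmin x z < 1/2 <= y.
Proof.
  assert (Hneg : midpoint_defect x y z < 0) by (unfold midpoint_defect; lra).
  assert (Hy : 1/2 <= y).
  { destruct (Rle_dec (1/2) y) as [Hy | Hy]; [assumption |].
    assert (0 <= midpoint_defect x y z) by (apply midpoint_defect_nonneg; lra).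
    lra. }
  split; [| exact Hy].
  destruct (Rlt_dec (Rmin x z) (1/2)) as [Hmin | Hmin]; [exact Hmin |].
  pose proof (Rmin_l x z); pose proof (Rmin_r x z).
  rewrite midpoint_defect_above in Hneg by lra; lra.
Qed.
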